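(* Let $\mathcal K$ be an abstract Krivine structure. Define on $\mathcal P(\Pi)$ the relation $P\sqsubseteq Q$ iff there is $t\in\mathrm{QP}$ with $t\perp\pi$ for every $\pi\in\{s\cdot\rho: s\in{}^\perp P,\ \rho\in Q\}$, and let $\sqsubseteq_\bullet$ be its restriction to $\mathcal P_\bullet(\Pi)$. Then the inclusion $(\mathcal P_\bullet(\Pi),\sqsubseteq_\bullet)\hookrightarrow(\mathcal P(\Pi),\sqsubseteq)$ is an equivalence of preorders.
   Context: An abstract Krivine structure $\mathcal K$ consists of sets $\Lambda,\Pi$, a relation $\perp\subseteq\Lambda\times\Pi$, a map $\mathrm{push}$ written $t\cdot\pi$ (associating to the right), an application $ts$ on $\Lambda$, a subset $\mathrm{QP}\subseteq\Lambda$ closed under application, and $\mathsf K,\mathsf S\in\mathrm{QP}$ with: $t\perp s\cdot\pi\Rightarrow ts\perp\pi$; $t\perp\pi\Rightarrow\mathsf K\perp t\cdot s\cdot\pi$; $tu(su)\perp\pi\Rightarrow\mathsf S\perp t\cdot s\cdot u\cdot\pi$. Polars: $L^\perp=\{\pi:\forall t\in L,\ t\perp\pi\}$, ${}^\perp P=\{t:\forall\pi\in P,\ t\perp\pi\}$; $\overline P=({}^\perp P)^\perp$; $\widehat P=\bigcup_{\pi\in P}\overline{\{\pi\}}$; $\mathcal P_\bullet(\Pi)=\{P:\widehat P=P\}$. A monotone map $f$ between preorders is an equivalence if there is a monotone $g$ in the other direction with $g\circ f$ and $f\circ g$ each pointwise isomorphic (mutually $\le$) to the identity. *)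

Set Implicit Arguments.

Record AKS := {
  Lam : Type;
  Pi : Type;
  perp : Lam -> Pi -> Prop;
  push : Lam -> Pi -> Pi;
  app : Lam -> Lam -> Lam;
  QP : Lam -> Prop;
  QP_app : forall t s, QP t -> QP s -> QP (app t s);
  kK : Lam;
  kS : Lam;
  kK_QP : QP kK;
  kS_QP : QP kS;
  ax_push : forall t s pi, perp t (push s pi) -> perp (app t s) pi;
  ax_K : forall t s pi, perp t pi -> perp kK (push t (push s pi));
  ax_S : forall t s u pi, perp (app (app t u) (app s u)) pi ->
           perp kS (push t (push s (push u pi)))
}.

Section Polars.
Variable K : AKS.

Definition polL (L : Lam K -> Prop) : Pi K -> Prop :=
  fun pi => forall t, L t -> perp K t pi.
Definition polP (P : Pi K -> Prop) : Lam K -> Prop :=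
  fun t => forall pi, P pi -> perp K t pi.
Definition clos (P : Pi K -> Prop) : Pi K -> Prop := polL (polP P).
Definition hat (P : Pi K -> Prop) : Pi K -> Prop :=
  fun rho => exists pi, P pi /\ clos (fun x => x = pi) rho.
Definition Pbullet (P : Pi K -> Prop) : Prop := forall rho, hat P rho <-> P rho.

Definition sqle (P Q : Pi K -> Prop) : Prop :=
  exists t, QP K t /\
    forall pi, (exists s rho, polP P s /\ Q rho /\ pi = push K s rho) -> perp K t pi.

Definition PbulletT := { P : Pi K -> Prop | Pbullet P }.
Definition sqle_bullet (P Q : PbulletT) : Prop := sqle (proj1_sig P) (proj1_sig Q).
Definition incl_bullet (P : PbulletT) : Pi K -> Prop := proj1_sig P.
End Polars.

Definition monotone {A B : Type} (leA : A -> A -> Prop) (leB : B -> B -> Prop)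
  (f : A -> B) : Prop := forall x y, leA x y -> leB (f x) (f y).

Definition preorder_equivalence {A B : Type} (leA : A -> A -> Prop)
  (leB : B -> B -> Prop) (f : A -> B) : Prop :=
  monotone leA leB f /\
  exists g : B -> A, monotone leB leA g /\
    (forall x, leA (g (f x)) x /\ leA x (g (f x))) /\
    (forall y, leB (f (g y)) y /\ leB y (f (g y))).


(* Every P is ⊑-isomorphic to its saturation \widehat P, which lies in
   P_bullet(Pi): the polar of \widehat P is that of P, so the identity
   combinator [S K K] realizes both P ⊑ \widehat P and \widehat P ⊑ P.
   Saturation is ⊑-monotone: if t realizes P ⊑ Q, its eta-expansion
   realizes \widehat P ⊑ \widehat Q, since for rho in the closure of some
   rho0 ∈ Q the term [t s] is orthogonal to rho0 and hence to rho.  Thus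
   saturation is an inverse of the inclusion up to isomorphism. *)

Lemma preorder_equivalence_of_coreflection {A B : Type}
    (leA : A -> A -> Prop) (leB : B -> B -> Prop) (f : A -> B) (g : B -> A) :
  (forall x y, leA x y <-> leB (f x) (f y)) ->
  monotone leB leA g ->
  (forall y, leB (f (g y)) y /\ leB y (f (g y))) ->
  preorder_equivalence leA leB f.
Proof.
  intros Hff Hg Hfg. split.
  - intros x y; apply Hff.
  - exists g. split; [exact Hg | split; [| exact Hfg]].
    intro x. destruct (Hfg (f x)) as [Hle Hge].
    split; apply Hff; assumption.
Qed.

Section Saturation.
Variable K : AKS.

Definition combI : Lam K := app K (app K (kS K) (kK K)) (kK K).

Lemma combI_QP : QP K combI.
Proof. unfold combI; repeat apply QP_app; auto using kK_QP, kS_QP. Qed.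

Lemma combI_perp s rho : perp K s rho -> perp K combI (push K s rho).
Proof.
  intro H. unfold combI. apply ax_push, ax_push, ax_S.
  apply ax_push, ax_push, ax_K; exact H.
Qed.

(* [eta t] is the combinatory term for [fun x => t x]. *)
Definition eta (t : Lam K) : Lam K :=
  app K (app K (kS K) (app K (app K (kS K) (app K (kK K) (kK K))) t)) (kK K).

Lemma eta_QP t : QP K t -> QP K (eta t).
Proof. intro; unfold eta; repeat apply QP_app; auto using kK_QP, kS_QP. Qed.

Lemma eta_perp t s rho : perp K (app K t s) rho -> perp K (eta t) (push K s rho).
Proof.
  intro H. unfold eta. apply ax_push, ax_push, ax_S.
  apply ax_push, ax_push, ax_push, ax_push, ax_S.
  apply ax_push, ax_push, ax_push, ax_K, ax_K. exact H.
Qed.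

Lemma sqle_intro (P Q : Pi K -> Prop) t :
  QP K t ->
  (forall s rho, polP K P s -> Q rho -> perp K t (push K s rho)) ->
  sqle K P Q.
Proof.
  intros Ht H. exists t; split; [exact Ht |].
  intros pi [s [rho [Hs [HQ ->]]]]. apply H; assumption.
Qed.

Lemma sqle_of_perp (P Q : Pi K -> Prop) :
  (forall s rho, polP K P s -> Q rho -> perp K s rho) -> sqle K P Q.
Proof.
  intro H. apply sqle_intro with combI; [exact combI_QP |].
  intros s rho Hs HQ. apply combI_perp, H; assumption.
Qed.

Lemma sub_clos (P : Pi K -> Prop) rho : P rho -> clos K P rho.
Proof. intros H t Ht. apply Ht, H. Qed.

Lemma sub_hat (P : Pi K -> Prop) rho : P rho -> hat K P rho.
Proof. intro H. exists rho; split; [exact H | apply sub_clos; reflexivity]. Qed.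

Lemma hat_sub_clos (P : Pi K -> Prop) rho : hat K P rho -> clos K P rho.
Proof.
  intros [pi [HP Hc]] t Ht. apply Hc.
  intros x ->. apply Ht, HP.
Qed.

Lemma polP_hat (P : Pi K -> Prop) s : polP K (hat K P) s -> polP K P s.
Proof. intros Hs pi HP. apply Hs, sub_hat, HP. Qed.

Lemma Pbullet_hat (P : Pi K -> Prop) : Pbullet K (hat K P).
Proof.
  intro rho; split; [| apply sub_hat].
  intros [pi [[pi' [HP Hc]] Hc']]. exists pi'; split; [exact HP |].
  intros t Ht. apply Hc'. intros x ->. apply Hc, Ht.
Qed.

Lemma sqle_hat (P : Pi K -> Prop) : sqle K P (hat K P).
Proof.
  apply sqle_of_perp. intros s rho Hs Hrho. apply (hat_sub_clos _ _ Hrho), Hs.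
Qed.

Lemma hat_sqle (P : Pi K -> Prop) : sqle K (hat K P) P.
Proof.
  apply sqle_of_perp. intros s rho Hs HP. apply Hs, sub_hat, HP.
Qed.

Lemma hat_monotone (P Q : Pi K -> Prop) : sqle K P Q -> sqle K (hat K P) (hat K Q).
Proof.
  intros [t [Ht H]]. apply sqle_intro with (eta t); [apply eta_QP, Ht |].
  intros s rho Hs [rho0 [HQ Hc]]. apply eta_perp, Hc.
  intros x ->. apply ax_push, H.
  exists s, rho0; repeat split; [apply polP_hat, Hs | exact HQ].
Qed.

Definition saturate (P : Pi K -> Prop) : PbulletT K :=
  exist (Pbullet K) (hat K P) (Pbullet_hat P).

End Saturation.

Theorem mainTheorem9 (K : AKS) :
  preorder_equivalence (@sqle_bullet K) (@sqle K) (@incl_bullet K).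
Proof.
  apply preorder_equivalence_of_coreflection with (g := saturate K).
  - intros P Q. apply iff_refl.
  - intros P Q. apply hat_monotone.
  - intro P. split; [apply hat_sqle | apply sqle_hat].
Qed.
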